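(* Let $\langle X\mid R\rangle$ be an $N$-homogeneous presentation with $X$ a finite totally ordered set. (1) For all integers $n\geq0$ and $m\geq l_N(n+2)$, $F_1^{n,m}=S_0^{(m)}\wedge\cdots\wedge S^{(m)}_{m-l_N(n+2)}$. (2) For all integers $n\geq1$ and $m\geq l_N(n+1)$, $F_2^{n,m}=S^{(m)}_{m-l_N(n+1)}\vee\cdots\vee S^{(m)}_{m-N}$.
   Context: $\mathbb{K}$ is a field, $N\geq2$, $X^{(m)}$ words of length $m$, $V=\mathbb{K}X$, $V^{\otimes m}=\mathbb{K}X^{(m)}$; $R\subset V^{\otimes N}$, $\overline R=\mathrm{span}(R)$, $I(R)_j=0$ ($j<N$), $I(R)_j=\sum_{i=0}^{j-N}V^{\otimes i}\otimes\overline R\otimes V^{\otimes j-N-i}$ ($j\geq N$). $X^{(m)}$ is lexicographically ordered, $\mathrm{lm}(f)$ the greatest word in $f\neq0$; elements of $R$ have leading coefficient $1$; a word is a normal form if it has no factor $\mathrm{lm}(f)$, $f\in R$; the presentation is reduced ($\mathrm{lm}(f)-f$ is a combination of normal-form words; $\mathrm{lm}(f)$ has no factor $\mathrm{lm}(g)$, $g\in R\setminus\{f\}$). $S\in\mathrm{End}(V^{\otimes N})$: $S(\mathrm{lm}(f))=\mathrm{lm}(f)-f$, $f\in R$, $S(w)=w$ otherwise (its kernel is $\overline R$). For $m\geq N$ and $0\leq i\leq m-N$, $S_i^{(m)}=\mathrm{id}_{V^{\otimes i}}\otimes S\otimes\mathrm{id}_{V^{\otimes m-N-i}}$. $l_N(2k)=kN$,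 $l_N(2k+1)=kN+1$; $J_1=V$, $J_2=\overline R$, $J_n=\bigcap_{i=0}^{l_N(n)-N}V^{\otimes i}\otimes\overline R\otimes V^{\otimes l_N(n)-N-i}$ ($n\geq3$). A reduction operator relatively to $X^{(m)}$ is a linear projector $T$ of $V^{\otimes m}$ with each $T(w)$ equal to $w$ or a combination of words $<w$; for each subspace $W$ there is a unique one with kernel $W$, $\theta_{X^{(m)}}^{-1}(W)$. Lattice: $T_1\wedge T_2=\theta^{-1}(\ker T_1+\ker T_2)$, $T_1\vee T_2=\theta^{-1}(\ker T_1\cap\ker T_2)$ (associative). For $m\geq l_N(n)$: $F_1^{n,m}=\theta_{X^{(m)}}^{-1}(I(R)_{m-l_N(n)}\otimes V^{\otimes l_N(n)})$; $F_2^{n,m}=\mathrm{id}$ if $m<l_N(n+1)$, else $\theta_{X^{(m)}}^{-1}(V^{\otimes m-l_N(n+1)}\otimes J_{n+1})$. *)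

From HB Require Import structures.
From mathcomp Require Import all_boot all_order all_algebra.
From Stdlib Require Import ClassicalEpsilon.
Set Implicit Arguments. Unset Strict Implicit. Unset Printing Implicit Defensive.
Import Order.TTheory GRing.Theory.
Local Open Scope ring_scope.

Definition lN (N n : nat) : nat := (n./2 * N + odd n)%N.

Section Presentation.
Variables (K : fieldType) (d : Order.disp_t) (X : finOrderType d) (N : nat).

(* V^{(x)m} = K X^{(m)} : K-valued functions on words of length m *)
Local Notation V m := {ffun m.-tuple X -> K^o}.

Fixpoint lexlt (s t : seq X) : bool :=
  match s, t with
  | x :: s', y :: t' => (x < y)%O || ((x == y) && lexlt s' t')
  | _, _ => false
  end.

Definition ew (m : nat) (w : m.-tuple X) : V m := [ffun u => (u == w)%:R].
(* basis vector of a sequence (0 if it has the wrong length) *)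
Definition eseq (m : nat) (s : seq X) : V m := [ffun u => (val u == s)%:R].

(* evaluation of f : V p on a sequence (0 if wrong length) *)
Definition feval (p : nat) (f : V p) (s : seq X) : K :=
  if insub s is Some t then f t else 0.

(* e_u (x) g (x) e_v, as an element of V m, g : V p, u of length i *)
Definition plc (m p i : nat) (u : seq X) (g : V p) (v : seq X) : V m :=
  [ffun w => if (take i (val w) == u) && (drop (i + p) (val w) == v)
             then feval g (take p (drop i (val w))) else 0].

(* V^{(x)i} (x) W (x) V^{(x) m-p-i} as a subspace of V^{(x)m}, W <= V^{(x)p} *)
Definition place (m i p : nat) (W : {vspace V p}) : {vspace V m} :=
  <<flatten [seq [seq plc m i (val u) f (val v) | f <- (vbasis W : seq (V p)),
                   v <- enum (predT : pred ((m - p - i).-tuple X))] | u <- enum (predT : pred (i.-tuple X))]>>%VS.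

Definition lm_of (f : V N) (w : N.-tuple X) : bool :=
  (f w != 0) && [forall u, (f u != 0) ==> ((u == w) || lexlt (val u) (val w))].

Variable R : seq (V N).

Definition normal_form (s : seq X) : bool :=
  all (fun g => ~~ [exists t : N.-tuple X, lm_of g t && infix (val t) s]) R.

Definition reduced_presentation : Prop :=
  (forall f, f \in R -> exists t, lm_of f t /\ f t = 1) /\
  (forall f, f \in R -> forall u, f u != 0 -> ~~ lm_of f u -> normal_form (val u)) /\
  (forall f g, f \in R -> g \in R -> f != g ->
     forall u v, lm_of f u -> lm_of g v -> ~~ infix (val u) (val v)).

Definition Rbar : {vspace V N} := <<R>>%VS.

Definition IR (j : nat) : {vspace V j} :=
  if (j < N)%N then 0%VS
  else (\sum_(i < (j - N).+1) place j i Rbar)%VS.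

(* J_n (J_1 = V, J_2 = Rbar, J_n = intersection for n >= 3; J_0 unused) *)
Definition J (n : nat) : {vspace V (lN N n)} :=
  if (n <= 1)%N then fullv
  else (\bigcap_(i < (lN N n - N).+1) place (lN N n) i Rbar)%VS.

Definition Sw (w : N.-tuple X) : V N :=
  match [seq f <- R | lm_of f w] with
  | f :: _ => ew w - f
  | [::] => ew w
  end.
Definition S : 'End(V N) := linfun (fun v : V N => \sum_w v w *: Sw w).

(* S_i^{(m)} = id_{V^{(x)i}} (x) S (x) id *)
Definition Sm (m i : nat) : 'End(V m) :=
  linfun (fun v : V m => \sum_w v w *:
     plc m i (take i (val w)) (S (eseq N (take N (drop i (val w)))))
         (drop (i + N) (val w))).

Definition red_op (m : nat) (T : 'End(V m)) : Prop :=
  (T \o T = T)%VF /\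
  forall w : m.-tuple X, T (ew w) = ew w \/
     forall u, T (ew w) u != 0 -> lexlt (val u) (val w).

(* theta^{-1}_{X^{(m)}}(W): the (unique) reduction operator with kernel W *)
Definition theta_inv (m : nat) (W : {vspace V m}) : 'End(V m) :=
  epsilon (inhabits \1%VF) (fun T => red_op T /\ lker T = W).

Definition rmeet (m : nat) (T1 T2 : 'End(V m)) : 'End(V m) :=
  theta_inv (lker T1 + lker T2)%VS.
Definition rjoin (m : nat) (T1 T2 : 'End(V m)) : 'End(V m) :=
  theta_inv (lker T1 :&: lker T2)%VS.

(* T_1 /\ ... /\ T_k (left-associated; the operations are associative) *)
Definition bigmeet (m : nat) (Ts : seq 'End(V m)) : 'End(V m) :=
  if Ts is T :: Ts' then foldl (@rmeet m) T Ts' else \1%VF.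
Definition bigjoin (m : nat) (Ts : seq 'End(V m)) : 'End(V m) :=
  if Ts is T :: Ts' then foldl (@rjoin m) T Ts' else \1%VF.

Definition F1 (n m : nat) : 'End(V m) :=
  theta_inv (place m 0 (IR (m - lN N n))).
Definition F2 (n m : nat) : 'End(V m) :=
  if (m < lN N n.+1)%N then \1%VF
  else theta_inv (place m (m - lN N n.+1) (J n.+1)).

End Presentation.

(* A reduction operator is determined by its kernel W: its image must lie in the span of
   the words that are not leading words of elements of W, and that span is a complement
   of W.  Hence theta_inv is inverse to the kernel map on reduction operators, and a meet
   (resp. join) of the S_i^(m) is the reduction operator whose kernel is the sum (resp.
   intersection) of their kernels.  On every slice at position i, S_i^(m) acts as S,
   whose kernel is Rbar; so the kernel of S_i^(m) is V^i (x) Rbar (x) V^(m-N-i), and both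
   identities follow because these placed subspaces nest and placement commutes with sums
   and intersections. *)

From HB Require Import structures.
From mathcomp Require Import all_boot all_order all_algebra zify.
From Stdlib Require Import ClassicalEpsilon.
Set Implicit Arguments. Unset Strict Implicit. Unset Printing Implicit Defensive.
Import Order.TTheory GRing.Theory.
Local Open Scope ring_scope.

Lemma linfun_linearE (K : fieldType) (aT rT : vectType K) (f : aT -> rT) :
  linear f -> linfun f =1 f.
Proof.
move=> lin_f; pose F : {linear aT -> rT} :=
  HB.pack f (GRing.isLinear.Build K aT rT *:%R f lin_f).
exact: (lfunE F).
Qed.

Lemma fin_strict_ind (T : finType) (r : rel T) : irreflexive r -> transitive r ->
  forall P : T -> Prop, (forall x, (forall y, r y x -> P y) -> P x) -> forall x, P x.
Proof.
move=> irr_r tr_r P IH.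
suff H k x : (#|[pred y | r y x]| < k)%N -> P x by move=> x; apply: (H _ x (ltnSn _)).
elim: k x => [//|k IHk] x lt_x; apply: IH => y ryx; apply: IHk.
rewrite ltnS in lt_x; apply: leq_trans lt_x; apply: proper_card; apply/properP; split.
  by apply/subsetP => z; rewrite !inE => rzy; apply: tr_r rzy ryx.
by exists y; rewrite !inE ?ryx ?irr_r.
Qed.

Section LexOrder.
Variables (d : Order.disp_t) (X : finOrderType d).
Implicit Types s t u v : seq X.

Definition lexle s t := (s == t) || lexlt s t.

Lemma lexltxx s : lexlt s s = false.
Proof. by elim: s => //= x s IH; rewrite ltxx eqxx. Qed.

Lemma lexlt_trans : transitive (@lexlt _ X).
Proof.
move=> t s u; elim: s t u => [|x s IH] [|y t] [|z u] //=.
case/orP=> [yx|/andP[/eqP-> ts]]; case/orP=> [xz|/andP[/eqP<- su]].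
- by rewrite (lt_trans yx xz).
- by rewrite yx.
- by rewrite xz.
- by rewrite eqxx (IH _ _ ts su) orbT.
Qed.

Lemma lexlt_asym s t : lexlt s t -> ~~ lexlt t s.
Proof. by move=> st; apply/negP => /(lexlt_trans st); rewrite lexltxx. Qed.

Lemma lexlt_total s t : size s = size t -> s != t -> lexlt s t || lexlt t s.
Proof.
elim: s t => [|x s IH] [|y t] //= [st]; rewrite eqseq_cons negb_and.
by case: (ltgtP x y) => //= _ /(IH _ st).
Qed.

Lemma lexlt_cat2l u s t : lexlt (u ++ s) (u ++ t) = lexlt s t.
Proof. by elim: u => //= x u ->; rewrite ltxx eqxx. Qed.

Lemma lexlt_catr s t v v' : size s = size t -> lexlt s t -> lexlt (s ++ v) (t ++ v').
Proof.
elim: s t => [|x s IH] [|y t] //= [st]; case/orP=> [->//|/andP[-> lt_st]].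
by rewrite (IH _ st lt_st) orbT.
Qed.

Lemma lexlt_cat_mid u s t v : size s = size t -> lexlt s t ->
  lexlt (u ++ s ++ v) (u ++ t ++ v).
Proof. by move=> st lt_st; rewrite lexlt_cat2l; apply: lexlt_catr. Qed.

End LexOrder.

Section WordSpan.
Variables (K : fieldType) (d : Order.disp_t) (X : finOrderType d) (m : nat).
Local Notation V := {ffun m.-tuple X -> K^o}.
Local Notation e := (@ew K d X m).
Implicit Types (x : V) (u w : m.-tuple X).

Lemma eseq_tuple (t : m.-tuple X) : eseq K m t = e t.
Proof. by apply/ffunP => u; rewrite !ffunE. Qed.

Lemma regular_scaleE (a b : K^o) : a *: b = a * b.
Proof. by []. Qed.

Lemma ewE w u : e w u = (u == w)%:R.
Proof. by rewrite ffunE. Qed.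

Lemma ew_supp w u : e w u != 0 -> u = w.
Proof. by rewrite ewE; have [//|_] := eqVneq u w; rewrite mulr0n eqxx. Qed.

Lemma sum_ew n (G : m.-tuple X -> {ffun n.-tuple X -> K^o}) w :
  \sum_u e w u *: G u = G w.
Proof.
rewrite (bigD1 w) //= big1 ?addr0 => [|u uw]; first by rewrite ewE eqxx scale1r.
by rewrite ewE (negbTE uw) scale0r.
Qed.

Lemma ffun_sum_ew x : x = \sum_w x w *: e w.
Proof.
apply/ffunP => u; rewrite sum_ffunE (bigD1 u) //= big1 => [|w wu].
  by rewrite !ffunE eqxx addr0 regular_scaleE mulr1.
by rewrite !ffunE eq_sym (negbTE wu) scaler0.
Qed.

Lemma memv_ew_supp (Z : {vspace V}) x : (forall u, x u != 0 -> e u \in Z) -> x \in Z.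
Proof.
move=> supp_Z; rewrite (ffun_sum_ew x); apply: memv_suml => u _.
by have [->|/supp_Z/memvZ//] := eqVneq (x u) 0; rewrite scale0r mem0v.
Qed.

Definition wspan (P : pred (m.-tuple X)) : {vspace V} := <<[seq e w | w <- enum P]>>%VS.

Lemma wspanP (P : pred (m.-tuple X)) x : reflect (forall u, x u != 0 -> P u) (x \in wspan P).
Proof.
apply: (iffP idP) => [xP u | supp_P]; last first.
  by apply: memv_ew_supp => u /supp_P Pu; apply/memv_span/map_f; rewrite mem_enum.
apply: contraNT => nPu.
have eval_lin : linear (fun y : V => y u : K^o) by move=> a y z; rewrite !ffunE.
have : (wspan P <= lker (linfun (fun y : V => y u : K^o)))%VS.
  apply/span_subvP => y /mapP[w]; rewrite mem_enum => Pw ->.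
  have uw : u != w by apply: contraNneq nPu => ->.
  by rewrite memv_ker linfun_linearE // ewE (negbTE uw).
by move/subvP/(_ x xP); rewrite memv_ker linfun_linearE.
Qed.

Lemma lexle_neq_lt u w : lexle u w -> u != w -> lexlt u w.
Proof. by case/orP => // /eqP/val_inj ->; rewrite eqxx. Qed.

Lemma lm_ofP x w : reflect (x w != 0 /\ forall u, x u != 0 -> lexle u w) (lm_of x w).
Proof.
apply: (iffP andP) => [[xw /forallP lm_w]|[xw lm_w]]; split => //.
  by move=> u xu; have := lm_w u; rewrite xu.
by apply/forallP => u; apply/implyP => /lm_w.
Qed.

Lemma lm_of_exists x : x != 0 -> exists w, lm_of x w.
Proof.
move=> x_neq0; have [w0 xw0] : exists w, x w != 0.
  apply/existsP; apply: contraNT x_neq0 => /existsPn x0.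
  by apply/eqP/ffunP => u; rewrite ffunE; apply/eqP; rewrite -[_ == 0]negbK x0.
move: w0 xw0; apply: (@fin_strict_ind _ (fun a b : m.-tuple X => lexlt b a)).
- exact: lexltxx.
- by move=> b a c ab bc; apply: lexlt_trans bc ab.
move=> w IH xw; have [/existsP[u /andP[xu wu]]|/existsPn w_max] :=
  boolP [exists u, (x u != 0) && lexlt w u]; first exact: IH u wu xu.
exists w; apply/lm_ofP; split => // u xu; rewrite /lexle.
case: (eqVneq u w) => [->|uw]; first by rewrite eqxx.
have size_uw : size u = size w by rewrite !size_tuple.
case/orP: (lexlt_total size_uw uw) => [->|wu]; first by rewrite orbT.
by have := w_max u; rewrite xu wu.
Qed.

Lemma lm_of_uniq x w w' : lm_of x w -> lm_of x w' -> w = w'.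
Proof.
move=> /lm_ofP[xw lm_w] /lm_ofP[xw' lm_w'].
case/orP: (lm_w _ xw') => [/eqP/val_inj->//|lt_w'w].
case/orP: (lm_w' _ xw) => [/eqP/val_inj->//|lt_ww'].
by move: (lexlt_asym lt_ww'); rewrite lt_w'w.
Qed.

Lemma word_ind (P : m.-tuple X -> Prop) :
  (forall w, (forall u, lexlt u w -> P u) -> P w) -> forall w, P w.
Proof.
apply: (@fin_strict_ind _ (fun a b : m.-tuple X => lexlt a b)) => [a|b a c].
  exact: lexltxx.
exact: lexlt_trans.
Qed.

End WordSpan.
Arguments wspan {K d X m} P.

Section ReductionOperators.
Variables (K : fieldType) (d : Order.disp_t) (X : finOrderType d) (m : nat).
Local Notation V := {ffun m.-tuple X -> K^o}.
Local Notation e := (@ew K d X m).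
Implicit Types (x y g : V) (u w : m.-tuple X) (W : {vspace V}) (T : 'End(V)).

(* Phrased as a subspace inclusion so that it is a boolean predicate. *)
Definition lead_word W w : bool :=
  ~~ ((W :&: wspan (fun u => lexle u w)) <= wspan (fun u => lexlt u w))%VS.

Lemma lead_wordP W w : reflect (exists2 g, g \in W & lm_of g w) (lead_word W w).
Proof.
rewrite /lead_word; apply: (iffP (@subvPn _ _ _ _)).
  move=> [g /memv_capP[gW /wspanP le_w] g_lt].
  exists g => //; apply/lm_ofP; split => //.
  apply: contraNneq g_lt => gw0; apply/wspanP => u gu.
  apply: lexle_neq_lt (le_w u gu) _.
  by apply: contraTneq gu => ->; rewrite gw0 eqxx.
move=> [g gW /lm_ofP[gw le_w]]; exists g; first by rewrite memv_cap gW; apply/wspanP.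
by apply/negP => /wspanP/(_ w gw); rewrite lexltxx.
Qed.

Definition nf_space W : {vspace V} := wspan (fun w => ~~ lead_word W w).

Lemma nf_space_lead W y w : y \in nf_space W -> lead_word W w -> y w = 0.
Proof. by move=> /wspanP y_nf lead_w; apply: contraTeq lead_w => /y_nf. Qed.

Lemma nf_space_cap W : (nf_space W :&: W = 0)%VS.
Proof.
apply/eqP; rewrite -subv0; apply/subvP => x /memv_capP[x_nf xW]; rewrite memv0.
apply: contraT => /lm_of_exists[w lm_w]; have /lm_ofP[xw _] := lm_w.
have lead_w : lead_word W w by apply/lead_wordP; exists x.
by rewrite (nf_space_lead x_nf lead_w) eqxx in xw.
Qed.

Lemma nf_space_add W : (nf_space W + W)%VS = fullv.
Proof.
apply/eqP; rewrite eqEsubv subvf; apply/subvP => x _; apply: memv_ew_supp => w _.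
elim/word_ind: w => w IH.
have [/lead_wordP[g gW /lm_ofP[gw le_w]]|not_lead] := boolP (lead_word W w); last first.
  by apply: (subvP (addvSl _ _)); apply/wspanP => u /ew_supp ->.
have -> : e w = (g w)^-1 *: g + (e w - (g w)^-1 *: g) by rewrite addrC subrK.
rewrite addrC; apply: memvD; last by apply: (subvP (addvSr _ _)); apply: memvZ.
apply: memv_ew_supp => u; rewrite !ffunE /= regular_scaleE.
have [->|uw] := eqVneq u w; first by rewrite mulVf // subrr eqxx.
rewrite /= sub0r oppr_eq0 mulf_eq0 negb_or => /andP[_ gu].
by apply: IH; apply: lexle_neq_lt uw; apply: le_w.
Qed.

Lemma red_op_supp T w u : red_op T -> T (e w) u != 0 -> lexle u w.
Proof.
case=> _ /(_ w) [->|lt_w]; first by move/ew_supp ->; rewrite /lexle eqxx.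
by move/lt_w => lt_uw; rewrite /lexle lt_uw orbT.
Qed.

(* Coefficients of smaller words cannot reach the leading word. *)
Lemma red_op_lm_coef T g w : red_op T -> lm_of g w -> T g w = g w * T (e w) w.
Proof.
move=> redT /lm_ofP[_ le_w].
rewrite {1}(ffun_sum_ew g) linear_sum sum_ffunE (bigD1 w) //= big1 ?addr0.
  by rewrite linearZ ffunE.
move=> v vw; rewrite linearZ ffunE /= regular_scaleE.
have [->|gv] := eqVneq (g v) 0; first by rewrite mul0r.
have lt_vw : lexlt v w by apply: lexle_neq_lt vw; apply: le_w.
have [->|/(red_op_supp redT)] := eqVneq (T (e v) w) 0; first by rewrite mulr0.
case/orP => [/eqP/val_inj wv|/lexlt_asym]; first by rewrite wv eqxx in vw.
by rewrite lt_vw.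
Qed.

Lemma red_op_exists W : exists T, red_op T /\ lker T = W.
Proof.
pose T := daddv_pi (nf_space W) W.
have capW := nf_space_cap W.
have capW' : (W :&: nf_space W = 0)%VS by rewrite capvC.
have T_add x : T x + daddv_pi W (nf_space W) x = x.
  by apply: daddv_pi_add; rewrite ?nf_space_add ?memvf.
exists T; split; last first.
  apply/vspaceP => x; rewrite memv_ker; apply/eqP/idP => [Tx0|xW].
    by rewrite -(T_add x) Tx0 add0r memv_pi.
  by move: (T_add x); rewrite daddv_pi_id // => /(canRL (addrK x)); rewrite subrr.
split; first by apply/lfunP => x; rewrite comp_lfunE daddv_pi_proj.
move=> w; have [lead_w|not_lead] := boolP (lead_word W w); last first.
  by left; apply: daddv_pi_id => //; apply/wspanP => u /ew_supp ->.
right; set y := T (e w).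
have y_nf : y \in nf_space W by apply: memv_pi.
have zW : e w - y \in W by rewrite -{1}(T_add (e w)) addrC addKr memv_pi.
have z_neq0 : e w - y != 0.
  rewrite subr_eq0; apply: contra_eq_neq (nf_space_lead y_nf lead_w) => <-.
  by rewrite ewE eqxx oner_eq0.
have [w' lm_w'] := lm_of_exists z_neq0; have /lm_ofP[zw' le_w'] := lm_w'.
have lead_w' : lead_word W w' by apply/lead_wordP; exists (e w - y).
have w'w : w' = w.
  by move: zw'; rewrite !ffunE (nf_space_lead y_nf lead_w') subr0 -ewE => /ew_supp.
move=> u yu; have uw : u != w.
  by apply: contraTneq yu => ->; rewrite (nf_space_lead y_nf lead_w) eqxx.
have := le_w' u; rewrite w'w !ffunE (negbTE uw) /= sub0r oppr_eq0 => /(_ yu).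
by move/lexle_neq_lt; apply.
Qed.

Lemma red_op_nf_space T x : red_op T -> T x \in nf_space (lker T).
Proof.
move=> redT; suff Te w : T (e w) \in nf_space (lker T).
  by rewrite (ffun_sum_ew x) linear_sum; apply: memv_suml => w _; rewrite linearZ /= memvZ ?Te.
elim/word_ind: w => w IH.
case: (redT) => TT /(_ w) [Tw|lt_w].
  rewrite Tw; apply/wspanP => u /ew_supp ->.
  apply/negP => /lead_wordP[g g_ker lm_w]; have /lm_ofP[gw _] := lm_w.
  move: g_ker; rewrite memv_ker => /eqP/(congr1 (fun f : V => f w)).
  by rewrite (red_op_lm_coef redT lm_w) Tw ewE eqxx mulr1 ffunE => /eqP; apply/negP.
have -> : T (e w) = T (T (e w)) by rewrite -comp_lfunE TT.
rewrite (ffun_sum_ew (T (e w))) linear_sum.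
apply: memv_suml => u _; rewrite linearZ /=.
have [->|/lt_w/IH Tu_nf] := eqVneq (T (e w) u) 0; first by rewrite scale0r mem0v.
exact: memvZ.
Qed.

Lemma red_op_inj T1 T2 : red_op T1 -> red_op T2 -> lker T1 = lker T2 -> T1 = T2.
Proof.
move=> red1 red2 ker12; apply/lfunP => x; apply/eqP; rewrite -subr_eq0 -memv0.
have in_ker T : red_op T -> x - T x \in lker T.
  by case=> TT _; rewrite memv_ker linearB /= -comp_lfunE TT subrr.
rewrite -(nf_space_cap (lker T1)) memv_cap; apply/andP; split.
  by apply: memvB; [|rewrite ker12]; apply: red_op_nf_space.
have -> : T1 x - T2 x = (x - T2 x) - (x - T1 x) by rewrite opprB [RHS]addrC addrA subrK.
by apply: memvB; [rewrite ker12|]; apply: in_ker.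
Qed.

End ReductionOperators.

Section ReductionLattice.
Variables (K : fieldType) (d : Order.disp_t) (X : finOrderType d) (m : nat).
Local Notation V := {ffun m.-tuple X -> K^o}.
Implicit Types (W : {vspace V}) (T : 'End(V)) (Ts : seq 'End(V)).

Lemma theta_invP W : red_op (theta_inv W) /\ lker (theta_inv W) = W.
Proof. exact: (epsilon_spec _ (fun T => red_op T /\ lker T = W) (red_op_exists W)). Qed.

Lemma red_op_theta_inv W : red_op (theta_inv W).
Proof. by case: (theta_invP W). Qed.

Lemma lker_theta_inv W : lker (theta_inv W) = W.
Proof. by case: (theta_invP W). Qed.

Lemma theta_invK T : red_op T -> theta_inv (lker T) = T.
Proof. by move=> redT; apply: red_op_inj (red_op_theta_inv _) redT (lker_theta_inv _). Qed.

Lemma bigmeetE Ts : Ts != [::] -> {in Ts, forall T, red_op T} ->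
  bigmeet Ts = theta_inv (\sum_(T <- Ts) lker T).
Proof.
case: Ts => [//|T Ts] _ /(_ T (mem_head _ _)).
elim: Ts T => [|T' Ts IH] T redT; first by rewrite big_seq1 theta_invK.
have /= -> := IH (rmeet T T') (red_op_theta_inv _).
by rewrite !big_cons lker_theta_inv addvA.
Qed.

Lemma bigjoinE Ts : Ts != [::] -> {in Ts, forall T, red_op T} ->
  bigjoin Ts = theta_inv (\bigcap_(T <- Ts) lker T).
Proof.
case: Ts => [//|T Ts] _ /(_ T (mem_head _ _)).
elim: Ts T => [|T' Ts IH] T redT; first by rewrite big_seq1 theta_invK.
have /= -> := IH (rjoin T T') (red_op_theta_inv _).
by rewrite !big_cons lker_theta_inv capvA.
Qed.

End ReductionLattice.

Section Slices.
Variables (K : fieldType) (d : Order.disp_t) (X : finOrderType d).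
Local Notation V m := {ffun m.-tuple X -> K^o}.
Implicit Types (s u v : seq X).

Lemma feval_tuple m (x : V m) (t : m.-tuple X) : feval x t = x t.
Proof. by rewrite /feval valK. Qed.

Lemma feval_ffun m (F : seq X -> K^o) s : size s = m ->
  feval ([ffun t : m.-tuple X => F t] : V m) s = F s.
Proof. by move=> /eqP s_m; rewrite /feval insubT ffunE. Qed.

Lemma feval_is_linear m s : linear (fun x : V m => feval x s : K^o).
Proof.
move=> a x y; rewrite /feval; case: insubP => [t _ _|_]; first by rewrite !ffunE.
by rewrite regular_scaleE mulr0 addr0.
Qed.

Definition slice m p u v (x : V m) : V p := [ffun t : p.-tuple X => feval x (u ++ t ++ v)].

Fact slice_is_linear m p u v : linear (@slice m p u v).
Proof.
by move=> a x y; apply/ffunP => t; rewrite !ffunE (feval_is_linear (u ++ t ++ v) a x y).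
Qed.

Definition plcL m p i u v (g : V p) : V m := plc m i u g v.

Fact plcL_is_linear m p i u v : linear (@plcL m p i u v).
Proof.
move=> a x y; apply/ffunP => w; rewrite !ffunE.
case: ifP => _; last by rewrite regular_scaleE mulr0 addr0.
exact: (feval_is_linear _ a x y).
Qed.

End Slices.

HB.instance Definition _ (K : fieldType) d (X : finOrderType d) m p (u v : seq X) :=
  GRing.isLinear.Build K {ffun m.-tuple X -> K^o} {ffun p.-tuple X -> K^o} *:%R _
    (@slice_is_linear K d X m p u v).
HB.instance Definition _ (K : fieldType) d (X : finOrderType d) m p i (u v : seq X) :=
  GRing.isLinear.Build K {ffun p.-tuple X -> K^o} {ffun m.-tuple X -> K^o} *:%R _
    (@plcL_is_linear K d X m p i u v).

Section Placement.
Variables (K : fieldType) (d : Order.disp_t) (X : finOrderType d).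
Local Notation V m := {ffun m.-tuple X -> K^o}.
Implicit Types (s u v : seq X).

Lemma sliceE m p u v (x : V m) (t : p.-tuple X) : slice p u v x t = feval x (u ++ t ++ v).
Proof. by rewrite ffunE. Qed.

Lemma sum_tuple_if (R : nmodType) n (F : seq X -> R) s : size s = n ->
  \sum_(t : n.-tuple X) (if s == t then F t else 0) = F s.
Proof.
by move=> /eqP s_n; rewrite -big_mkcond (big_pred1 (Tuple s_n)).
Qed.

Lemma cat_take_mid_drop s i p : take i s ++ take p (drop i s) ++ drop (i + p) s = s.
Proof. by rewrite addnC -drop_drop !cat_take_drop. Qed.

Lemma size_take_drop m (w : m.-tuple X) i p : (i + p <= m)%N -> size (take p (drop i w)) = p.
Proof. by move=> h; rewrite size_take size_drop size_tuple; apply/minn_idPl; lia. Qed.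

Lemma memv_place m p i (W : {vspace V p}) (g : V p) (u : i.-tuple X)
    (v : (m - p - i).-tuple X) :
  g \in W -> plc m i u g v \in place m i W.
Proof.
move=> gW; rewrite -[plc _ _ _ _ _]/(plcL m i u v g) (coord_vbasis gW) linear_sum.
apply: memv_suml => k _; rewrite linearZ /=; apply/memvZ/memv_span.
apply/flatten_mapP; exists u; rewrite ?mem_enum //; apply/allpairsP.
by exists ((vbasis W)`_k, v); rewrite /= mem_enum mem_nth ?size_tuple.
Qed.

Lemma place_subvP m p i (W : {vspace V p}) (Z : {vspace V m}) :
  (forall (u : i.-tuple X) (v : (m - p - i).-tuple X) g, g \in W -> plc m i u g v \in Z) ->
  (place m i W <= Z)%VS.
Proof.
move=> plcZ; apply/span_subvP => y /flatten_mapP[u _ /allpairsP[[g v] [/= gW _ ->]]].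
exact/plcZ/vbasis_mem.
Qed.

Lemma place_addv m p i (A B : {vspace V p}) :
  place m i (A + B) = (place m i A + place m i B)%VS.
Proof.
apply/eqP; rewrite eqEsubv subv_add; apply/and3P; split.
- apply: place_subvP => u v g /memv_addP[a aA [b bB ->]].
  by rewrite -[plc _ _ _ _ _]/(plcL m i u v (a + b)) linearD; apply: memv_add; apply: memv_place.
- by apply: place_subvP => u v g gA; apply: memv_place; apply: (subvP (addvSl _ _)).
- by apply: place_subvP => u v g gB; apply: memv_place; apply: (subvP (addvSr _ _)).
Qed.

Lemma place0 m p i : place m i (0 : {vspace V p}) = 0%VS.
Proof.
apply/eqP; rewrite -subv0; apply: place_subvP => u v g; rewrite memv0 => /eqP ->.
by rewrite -[plc _ _ _ _ _]/(plcL m i u v 0) linear0 mem0v.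
Qed.

Section FittingPosition.
Variables (m p i : nat).
Hypothesis fits : (i + p <= m)%N.
Local Notation sizes u v := (size u = i /\ size v = (m - p - i)%N).

Lemma slice_plc u v u' v' (g : V p) : size u = i -> size v = (m - p - i)%N ->
  slice p u v (plc m i u' g v') = if (u == u') && (v == v') then g else 0.
Proof.
move=> su sv; apply/ffunP => t; rewrite sliceE.
have st : size (u ++ t ++ v) = m by rewrite !size_cat size_tuple su sv; lia.
rewrite -[u ++ t ++ v]/(val (Tuple (introT eqP st))) feval_tuple ffunE /=.
rewrite take_size_cat // addnC -drop_drop !drop_size_cat ?size_tuple //.
rewrite take_size_cat ?size_tuple //.
by case: ifP => _; rewrite ?feval_tuple ?ffunE.
Qed.

Lemma slice_eval (x : V m) (w : m.-tuple X) :
  x w = feval (slice p (take i w) (drop (i + p) w) x) (take p (drop i w)).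
Proof.
rewrite (feval_ffun (fun s => feval x (take i w ++ s ++ drop (i + p) w))).
  by rewrite cat_take_mid_drop feval_tuple.
exact: size_take_drop.
Qed.

Lemma size_take_fits (w : m.-tuple X) : size (take i w) = i.
Proof. by rewrite size_take size_tuple; apply/minn_idPl; lia. Qed.

Lemma size_drop_fits (w : m.-tuple X) : size (drop (i + p) w) = (m - p - i)%N.
Proof. by rewrite size_drop size_tuple; lia. Qed.

Lemma slice_inj (x y : V m) :
  (forall u v, size u = i -> size v = (m - p - i)%N -> slice p u v x = slice p u v y) ->
  x = y.
Proof.
move=> eq_slices; apply/ffunP => w.
by rewrite !(slice_eval _ w) eq_slices ?size_take_fits ?size_drop_fits.
Qed.

Lemma ew_plc (w : m.-tuple X) :
  ew K w = plc m i (take i w) (eseq K p (take p (drop i w))) (drop (i + p) w).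
Proof.
apply/ffunP => w'; rewrite !ffunE.
rewrite (feval_ffun (fun s => ((s == take p (drop i w))%:R : K^o))); last exact: size_take_drop.
have [->|w'w] := eqVneq w' w; first by rewrite !eqxx.
case: ifP => // /andP[/eqP eq_pre /eqP eq_suf]; case: eqP => // eq_mid; case/eqP: w'w.
apply: val_inj; rewrite /= -(cat_take_mid_drop w' i p) -(cat_take_mid_drop w i p).
by rewrite eq_pre eq_suf eq_mid.
Qed.

Lemma sum_plc_slice (x : V m) :
  x = \sum_(u : i.-tuple X) \sum_(v : (m - p - i).-tuple X) plc m i u (slice p u v x) v.
Proof.
apply/ffunP => w; rewrite sum_ffunE.
under eq_bigr => u _ do rewrite sum_ffunE.
under eq_bigr => u _ do under eq_bigr => v _ do rewrite ffunE.
rewrite (slice_eval x w).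
have inner (u : i.-tuple X) :
    \sum_(v : (m - p - i).-tuple X) (if (take i w == u) && (drop (i + p) w == v)
       then feval (slice p u v x) (take p (drop i w)) else 0) =
    if take i w == u then feval (slice p u (drop (i + p) w) x) (take p (drop i w)) else 0.
  case: eqP => _ /=; last by rewrite big1.
  by rewrite (sum_tuple_if (fun v => feval (slice p u v x) _)) ?size_drop_fits.
under eq_bigr => u _ do rewrite inner.
by rewrite (sum_tuple_if (fun u => feval (slice p u _ x) _)) ?size_take_fits.
Qed.

Lemma placeP (W : {vspace V p}) (x : V m) :
  reflect (forall u v, size u = i -> size v = (m - p - i)%N -> slice p u v x \in W)
          (x \in place m i W).
Proof.
apply: (iffP idP) => [x_in u v su sv|slices_in]; last first.
  rewrite (sum_plc_slice x); apply: memv_suml => u _; apply: memv_suml => v _.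
  by apply/memv_place/slices_in; rewrite size_tuple.
move: x_in => /(@coord_span _ _ _ (in_tuple _)) ->.
rewrite linear_sum; apply: memv_suml => k _; rewrite linearZ /=; apply: memvZ.
have /flatten_mapP[u' _ /allpairsP[[g v'] [/= gW _ ->]]] := mem_nth 0 (ltn_ord k).
by rewrite slice_plc //; case: ifP => _; rewrite ?mem0v ?vbasis_mem.
Qed.

Lemma place_capv (A B : {vspace V p}) :
  place m i (A :&: B) = (place m i A :&: place m i B)%VS.
Proof.
apply/vspaceP => x; rewrite memv_cap; apply/placeP/andP => [slAB|[/placeP slA /placeP slB]].
  by split; apply/placeP => u v su sv; have /memv_capP[] := slAB u v su sv.
by move=> u v su sv; rewrite memv_cap slA ?slB.
Qed.

Lemma place_fullv : place m i (fullv : {vspace V p}) = fullv.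
Proof. by apply/vspaceP => x; rewrite memvf; apply/placeP => *; rewrite memvf. Qed.

End FittingPosition.

Lemma slice_slice L m p u v u' v' (x : V m) : (size u' + p + size v')%N = L ->
  slice p u' v' (slice L u v x) = slice p (u ++ u') (v' ++ v) x.
Proof.
move=> sL; apply/ffunP => t; rewrite !sliceE.
rewrite (feval_ffun (fun s => feval x (u ++ s ++ v))); first by rewrite -!catA.
by rewrite !size_cat size_tuple addnA.
Qed.

Lemma place_place m L a i p (W : {vspace V p}) : (a + L <= m)%N -> (i + p <= L)%N ->
  place m a (place L i W) = place m (a + i) W.
Proof.
move=> fitsL fitsW; have fits : (a + i + p <= m)%N by lia.
apply/vspaceP => x; apply/(placeP fitsL)/(placeP fits) => [slL U V' sU sV'|sl u v su sv].
  have -> : slice p U V' x = slice p (drop a U) (take (L - p - i) V')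
                               (slice L (take a U) (drop (L - p - i) V') x).
    by rewrite slice_slice ?cat_take_drop // size_drop size_takel; lia.
  apply/(placeP fitsW); rewrite ?size_drop ?size_takel; try lia.
  by apply: slL; rewrite ?size_drop ?size_takel; lia.
apply/(placeP fitsW) => u' v' su' sv'; rewrite slice_slice; last by lia.
by apply: sl; rewrite size_cat; lia.
Qed.

End Placement.

Section RewritingOperator.
Variables (K : fieldType) (d : Order.disp_t) (X : finOrderType d).
Local Notation V m := {ffun m.-tuple X -> K^o}.

Lemma coef_sum_is_linear m n (G : m.-tuple X -> V n) :
  linear (fun x : V m => \sum_w x w *: G w).
Proof.
move=> a x y; rewrite scaler_sumr -big_split; apply: eq_bigr => w _.
by rewrite !ffunE scalerDl scalerA.
Qed.

Variables (N : nat) (R : seq (V N)).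
Hypothesis reducedR : reduced_presentation R.

Lemma SE (x : V N) : S R x = \sum_w x w *: Sw R w.
Proof. exact/linfun_linearE/coef_sum_is_linear. Qed.

Lemma S_ew (t : N.-tuple X) : S R (ew K t) = Sw R t.
Proof. by rewrite SE sum_ew. Qed.

Lemma Sw_cases (t : N.-tuple X) :
  Sw R t = ew K t \/ exists2 f, f \in R & lm_of f t /\ Sw R t = ew K t - f.
Proof.
rewrite /Sw; case E: [seq f <- R | lm_of f t] => [|f fs]; [by left | right].
have : f \in [seq f <- R | lm_of f t] by rewrite E mem_head.
by rewrite mem_filter => /andP[lm_f fR]; exists f.
Qed.

Lemma Sw_lm (f : V N) (t : N.-tuple X) : f \in R -> lm_of f t -> Sw R t = ew K t - f.
Proof.
move=> fR lm_f; have f_sel : f \in [seq f <- R | lm_of f t] by rewrite mem_filter lm_f fR.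
rewrite /Sw; case E: [seq f <- R | lm_of f t] f_sel => [//|g gs] _.
have : g \in [seq f <- R | lm_of f t] by rewrite E mem_head.
rewrite mem_filter => /andP[lm_g gR]; case: (eqVneq f g) => [->//|fg].
by have [_ [_ /(_ f g fR gR fg t t lm_f lm_g)]] := reducedR; rewrite infix_refl.
Qed.

Lemma lm_coef1 (f : V N) (t : N.-tuple X) : f \in R -> lm_of f t -> f t = 1.
Proof.
move=> fR lm_t; have [t' [lm_t' ft']] := reducedR.1 f fR.
by rewrite (lm_of_uniq lm_t lm_t').
Qed.

Lemma Sw_normal (t : N.-tuple X) : normal_form R t -> Sw R t = ew K t.
Proof.
move=> /allP t_nf; rewrite /Sw; case E: [seq f <- R | lm_of f t] => [//|f fs].
have : f \in [seq f <- R | lm_of f t] by rewrite E mem_head.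
rewrite mem_filter => /andP[lm_f /t_nf /existsPn/(_ t)].
by rewrite lm_f infix_refl.
Qed.

Lemma S_rel (f : V N) : f \in R -> S R f = 0.
Proof.
move=> fR; have [t [lm_t ft]] := reducedR.1 f fR.
rewrite SE (bigD1 t) //= (Sw_lm fR lm_t) ft scale1r.
rewrite (eq_bigr (fun w => f w *: ew K w)) => [|w wt]; last first.
  have [->|fw] := eqVneq (f w) 0; first by rewrite !scale0r.
  have lm_w : ~~ lm_of f w by apply: contra wt => /(lm_of_uniq lm_t) <-.
  by rewrite Sw_normal // (reducedR.2.1 f fR w fw lm_w).
have -> : \sum_(w | w != t) f w *: ew K w = f - ew K t.
  by rewrite [in RHS](ffun_sum_ew f) [in RHS](bigD1 t) //= ft scale1r addrAC subrr add0r.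
by rewrite addrA subrK subrr.
Qed.

Lemma ew_subr_Sw (t : N.-tuple X) : ew K t - Sw R t \in Rbar R.
Proof.
case: (Sw_cases t) => [->|[f fR [_ ->]]]; first by rewrite subrr mem0v.
by rewrite opprB addrC subrK memv_span.
Qed.

Lemma lker_S : lker (S R) = Rbar R.
Proof.
apply/vspaceP => x; rewrite memv_ker; apply/eqP/idP => [Sx0|xR].
  have : x - S R x = \sum_w x w *: (ew K w - Sw R w).
    by rewrite SE {1}(ffun_sum_ew x) -sumrB; apply: eq_bigr => w _; rewrite scalerBr.
  rewrite Sx0 subr0 => ->; apply: memv_suml => w _; apply/memvZ/ew_subr_Sw.
have : (Rbar R <= lker (S R))%VS by apply/span_subvP => f fR; rewrite memv_ker S_rel.
by move/subvP/(_ x xR); rewrite memv_ker => /eqP.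
Qed.

Lemma S_Sw (t : N.-tuple X) : S R (Sw R t) = Sw R t.
Proof.
case: (Sw_cases t) => [Sw_t|[f fR [_ Sw_t]]]; rewrite {1}Sw_t ?linearB /= S_ew //.
by rewrite S_rel // subr0.
Qed.

Lemma S_idem (x : V N) : S R (S R x) = S R x.
Proof.
rewrite [S R x]SE linear_sum; apply: eq_bigr => w _.
by rewrite linearZ /= S_Sw.
Qed.

Section LocalOperator.
Variables (m i : nat).
Hypothesis fits : (i + N <= m)%N.

Lemma SmE (x : V m) : Sm R m i x = \sum_w x w *:
  plc m i (take i w) (S R (eseq K N (take N (drop i w)))) (drop (i + N) w).
Proof. exact/linfun_linearE/coef_sum_is_linear. Qed.

Lemma slice_Sm u v (x : V m) : size u = i -> size v = (m - N - i)%N ->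
  slice N u v (Sm R m i x) = S R (slice N u v x).
Proof.
move=> su sv; rewrite SmE {2}(ffun_sum_ew x) !linear_sum; apply: eq_bigr => w _.
rewrite !linearZ /= (ew_plc K fits w) !slice_plc //.
by case: ifP => _; rewrite ?linear0.
Qed.

Lemma lker_Sm : lker (Sm R m i) = place m i (Rbar R).
Proof.
apply/vspaceP => x; rewrite memv_ker; apply/eqP/(placeP fits) => [Sx0 u v su sv|x_in].
  by rewrite -lker_S memv_ker -slice_Sm // Sx0 linear0.
apply: (slice_inj fits) => u v su sv; rewrite slice_Sm // linear0.
by apply/eqP; rewrite -memv_ker lker_S x_in.
Qed.

Lemma Sm_ew (w : m.-tuple X) (t : N.-tuple X) : val t = take N (drop i w) ->
  Sm R m i (ew K w) = plc m i (take i w) (Sw R t) (drop (i + N) w).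
Proof.
by move=> t_mid; rewrite SmE sum_ew -t_mid eseq_tuple S_ew.
Qed.

Lemma red_op_Sm : red_op (Sm R m i).
Proof.
split.
  apply/lfunP => x; rewrite comp_lfunE; apply: (slice_inj fits) => u v su sv.
  by rewrite !slice_Sm // S_idem.
move=> w; pose t := Tuple (introT eqP (size_take_drop w fits)).
have Sm_w := @Sm_ew w t erefl.
case: (Sw_cases t) => [Sw_t|[f fR [lm_f Sw_t]]].
  by left; rewrite Sm_w Sw_t -eseq_tuple [RHS](ew_plc K fits w).
right => w'; rewrite Sm_w Sw_t ffunE.
case: ifP => [/andP[/eqP pre /eqP suf]|_]; last by rewrite eqxx.
pose t' := Tuple (introT eqP (size_take_drop w' fits)).
rewrite -[take N (drop i w')]/(val t') feval_tuple !ffunE => coef_t'.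
have t't : t' != t.
  by apply: contraNneq coef_t' => ->; rewrite eqxx (lm_coef1 fR lm_f) subrr.
have ft' : f t' != 0 by apply: contraNneq coef_t' => ->; rewrite (negbTE t't) subrr.
have lt_t't : lexlt t' t by apply: lexle_neq_lt t't; case/lm_ofP: lm_f => _; apply.
rewrite -[val w'](cat_take_mid_drop _ i N) -[val w](cat_take_mid_drop _ i N) pre suf.
by apply: lexlt_cat_mid; rewrite ?size_tuple.
Qed.

End LocalOperator.

End RewritingOperator.

Lemma lN_SS N n : lN N n.+2 = (lN N n + N)%N.
Proof. by rewrite /lN /= negbK mulSn; lia. Qed.

Lemma big_iota_ord (R : Type) (idx : R) (op : R -> R -> R) a n (F : nat -> R) :
  \big[op/idx]_(i <- iota a n) F i = \big[op/idx]_(k < n) F (a + k)%N.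
Proof.
rewrite -{1}[a]addn0 iotaDl big_map (_ : iota 0 n = index_iota 0 n) ?big_mkord //.
by rewrite /index_iota subn0.
Qed.

Section OperatorLattice.
Variables (K : fieldType) (d : Order.disp_t) (X : finOrderType d) (N : nat).
Variables (R : seq {ffun N.-tuple X -> K^o}).
Hypothesis reducedR : reduced_presentation R.

Lemma F1_bigmeet n m : (lN N n.+2 <= m)%N ->
  F1 R n m = bigmeet [seq Sm R m i | i <- iota 0 (m - lN N n.+2).+1].
Proof.
rewrite lN_SS => fits.
have red_Sm : {in [seq Sm R m i | i <- iota 0 (m - (lN N n + N)).+1], forall T, red_op T}.
  by move=> T /mapP[i]; rewrite mem_iota => /andP[_ i_k] ->; apply: red_op_Sm => //; lia.
rewrite /F1 bigmeetE // big_map big_iota_ord; congr theta_inv.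
rewrite /IR ifN; last by rewrite -leqNgt; lia.
rewrite (big_morph _ (place_addv m 0) (place0 K X m _ 0)) -subnDA.
by apply: eq_bigr => i _; have i_lt := ltn_ord i; rewrite place_place ?lker_Sm //; lia.
Qed.

Lemma F2_bigjoin n m : (1 <= n)%N -> (lN N n.+1 <= m)%N ->
  F2 R n m = bigjoin [seq Sm R m i | i <- iota (m - lN N n.+1) (lN N n.+1 - N).+1].
Proof.
move=> n_gt0 fits; have N_le_L : (N <= lN N n.+1)%N.
  by case: n n_gt0 fits => [//|n] _ _; rewrite lN_SS; lia.
have red_Sm : {in [seq Sm R m i | i <- iota (m - lN N n.+1) (lN N n.+1 - N).+1],
                 forall T, red_op T}.
  by move=> T /mapP[i]; rewrite mem_iota => /andP[_ i_lt] ->; apply: red_op_Sm => //; lia.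
rewrite /F2 ifN; last by rewrite -leqNgt.
rewrite bigjoinE // big_map big_iota_ord; congr theta_inv.
have fitsJ : (m - lN N n.+1 + lN N n.+1 <= m)%N by lia.
rewrite /J ifN; last by rewrite -leqNgt.
rewrite (big_morph _ (place_capv fitsJ) (place_fullv K X fitsJ)).
by apply: eq_bigr => i _; have i_lt := ltn_ord i; rewrite place_place ?lker_Sm //; lia.
Qed.

End OperatorLattice.

Theorem lemma4p1p3 (K : fieldType) (d : Order.disp_t) (X : finOrderType d)
    (N : nat) (R : seq {ffun N.-tuple X -> K^o}) :
  (2 <= N)%N -> reduced_presentation R ->
  (forall n m : nat, (lN N n.+2 <= m)%N ->
     F1 R n m = bigmeet [seq Sm R m i | i <- iota 0 (m - lN N n.+2).+1])
  /\
  (forall n m : nat, (1 <= n)%N -> (lN N n.+1 <= m)%N ->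
     F2 R n m = bigjoin [seq Sm R m i | i <- iota (m - lN N n.+1) (lN N n.+1 - N).+1]).
Proof.
by move=> _ reducedR; split; [exact: F1_bigmeet | exact: F2_bigjoin].
Qed.
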